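(* Up to multiplication by a positive integer, every basic weight of a basic system of type $A$ is one of the following (written in coordinates $(\lambda_1,\dots,\lambda_{n+1})$, $\lambda_k=\langle\lambda,e_k\rangle$): (1) $(A_1,1,1)$: $(\tfrac12,-\tfrac12)$, $(-\tfrac12,\tfrac12)$; (2) $(A_2,1,1)$: $(-\tfrac13,\tfrac23,-\tfrac13)$; (3) $(A_2,1,2)$: $(\tfrac13,\tfrac13,-\tfrac23)$; (4) $(A_2,2,1)$: $(\tfrac23,-\tfrac13,-\tfrac13)$; (5) $(A_2,2,2)$: $(\tfrac13,-\tfrac23,\tfrac13)$; (6) $(A_3,2,2)$: $(\tfrac12,-\tfrac12,\tfrac12,-\tfrac12)$.
   Context: $A_n$ is realized in the hyperplane $\{\sum x_k=0\}$ of $\mathbb R^{n+1}$ with orthonormal basis $e_1,\dots,e_{n+1}$ and standard inner product, with simple roots $\alpha_k=e_k-e_{k+1}$. Let $W$ be the Weyl group, $\alpha^\vee=2\alpha/\langle\alpha,\alpha\rangle$. A weight is integral if $\langle\lambda,\alpha^\vee\rangle\in\mathbb Z$ for all roots $\alpha$; $\overline\lambda$ is the dominant weight in $W\lambda$. For $I=\Delta\setminus\{\alpha_i\}$, $J=\Delta\setminus\{\alpha_j\}$, a basic weight of $(\Phi,i,j)$ is an integral $\lambda$ with $\langle\lambda,\alpha^\vee\rangle\in\mathbb Z_{>0}$ for all $\alpha\in I$ and $\{\alpha\in\Delta:\langle\overline\lambda,\alpha\rangle=0\}=J$; $(\Phi,i,j)$ is a basic system if it has a basic weight. *)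

From HB Require Import structures.
From mathcomp Require Import all_boot all_order all_algebra.
From Stdlib Require Import Relations.Relation_Definitions Relations.Relation_Operators.
Set Implicit Arguments. Unset Strict Implicit. Unset Printing Implicit Defensive.
Import Order.TTheory GRing.Theory Num.Theory.
Local Open Scope ring_scope.

Definition evec (R : fieldType) (n : nat) (k : 'I_n.+1) : 'rV[R]_(n.+1) :=
  delta_mx 0 k.

Definition ip (R : fieldType) (n : nat) (u v : 'rV[R]_(n.+1)) : R :=
  \sum_(k < n.+1) u 0 k * v 0 k.

Definition is_root (R : fieldType) (n : nat) (a : 'rV[R]_(n.+1)) : Prop :=
  exists (p q : 'I_n.+1), p != q /\ a = evec R p - evec R q.

Definition coroot (R : fieldType) (n : nat) (a : 'rV[R]_(n.+1)) : 'rV[R]_(n.+1) :=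
  (2 / ip a a) *: a.

(* simple root alpha_{k+1} = e_{k+1} - e_{k+2} (paper's 1-based indexing),
   for k : 'I_n *)
Definition simple_root (R : fieldType) (n : nat) (k : 'I_n) : 'rV[R]_(n.+1) :=
  evec R (widen_ord (leqnSn n) k) - evec R (lift ord0 k).

Definition reflect_by (R : fieldType) (n : nat) (a v : 'rV[R]_(n.+1)) :=
  v - ip v (coroot a) *: a.

Definition weyl_step (R : fieldType) (n : nat) : relation 'rV[R]_(n.+1) :=
  fun x y => exists a, is_root a /\ y = reflect_by a x.

Definition in_W_orbit (R : fieldType) (n : nat) (lam mu : 'rV[R]_(n.+1)) : Prop :=
  clos_refl_trans _ (@weyl_step R n) lam mu.

Definition is_integer (R : numDomainType) (x : R) : Prop :=
  exists z : int, x = z%:~R.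

Definition in_hyperplane (R : fieldType) (n : nat) (lam : 'rV[R]_(n.+1)) : Prop :=
  \sum_(k < n.+1) lam 0 k = 0.

Definition integral (R : numFieldType) (n : nat) (lam : 'rV[R]_(n.+1)) : Prop :=
  in_hyperplane lam /\ forall a, is_root a -> is_integer (ip lam (coroot a)).

Definition dominant (R : numFieldType) (n : nat) (mu : 'rV[R]_(n.+1)) : Prop :=
  forall k : 'I_n, 0 <= ip mu (coroot (simple_root R k)).

(* basic weight of (A_n, i, j), with i, j in {1,..,n} (paper's indexing):
   simple root alpha_{k+1} corresponds to k : 'I_n. *)
Definition basic_weight (R : numFieldType) (n i j : nat) (lam : 'rV[R]_(n.+1)) : Prop :=
  [/\ integral lam,
      (forall k : 'I_n, k.+1 != i ->
         exists z : int, (0 < z)%R /\ ip lam (coroot (simple_root R k)) = z%:~R)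
    & exists mu, [/\ in_W_orbit lam mu, dominant mu &
         forall k : 'I_n, ip mu (simple_root R k) = 0 <-> k.+1 != j]].

Definition basic_system (R : numFieldType) (n i j : nat) : Prop :=
  exists lam : 'rV[R]_(n.+1), basic_weight i j lam.

Definition candidates (R : fieldType) (n i j : nat) : seq (seq R) :=
  match n, i, j with
  | 1%N, 1%N, 1%N => [:: [:: 1/2; -(1/2)]; [:: -(1/2); 1/2]]
  | 2%N, 1%N, 1%N => [:: [:: -(1/3); 2/3; -(1/3)]]
  | 2%N, 1%N, 2%N => [:: [:: 1/3; 1/3; -(2/3)]]
  | 2%N, 2%N, 1%N => [:: [:: 2/3; -(1/3); -(1/3)]]
  | 2%N, 2%N, 2%N => [:: [:: 1/3; -(2/3); 1/3]]
  | 3%N, 2%N, 2%N => [:: [:: 1/2; -(1/2); 1/2; -(1/2)]]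
  | _, _, _ => [::]
  end.

Definition listed (R : fieldType) (n i j : nat) (mu : 'rV[R]_(n.+1)) : Prop :=
  exists2 s, s \in candidates R n i j & forall k : 'I_n.+1, mu 0 k = s`_k.

Arguments basic_weight {R} n i j lam.
Arguments basic_system R n i j.
Arguments listed {R} n i j mu.

From HB Require Import structures.
From mathcomp Require Import all_boot all_order all_algebra all_fingroup.
From mathcomp Require Import zify ring.
Set Implicit Arguments. Unset Strict Implicit. Unset Printing Implicit Defensive.
Import Order.TTheory GRing.Theory Num.Theory.
Local Open Scope ring_scope.

(* Let mu be the dominant weight in the orbit of a basic weight lam.  Since
   <mu, alpha_k> vanishes exactly for k <> j, mu takes two values a > b, the
   larger one on its first j coordinates, and lam is a permutation of mu.
   Integrality makes a - b = m a positive integer, and the coordinate sum 0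
   then forces b = - m j / (n + 1).  For every k <> i the positivity of
   <lam, alpha_k^vee> = lam_k - lam_(k+1) forces lam_k = a and lam_(k+1) = b;
   two consecutive such k would contradict each other, so n <= 3, and the few
   remaining patterns are those of the list. *)

Section InnerProduct.
Variables (R : fieldType) (n : nat).
Implicit Types (u v w : 'rV[R]_n.+1) (p : 'I_n.+1).

Lemma ip_evecr u p : ip u (evec R p) = u 0 p.
Proof.
rewrite /ip (bigD1 p) //= big1 => [|k kp]; rewrite /evec !mxE ?eqxx /=.
  by rewrite mulr1 addr0.
by rewrite (negbTE kp) mulr0.
Qed.

Lemma ipBr u v w : ip u (v - w) = ip u v - ip u w.
Proof. by rewrite /ip -sumrB; apply: eq_bigr => k _; rewrite !mxE mulrBr. Qed.

End InnerProduct.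

Section RootCalculus.
Variables (R : numFieldType) (n : nat).
Implicit Types (u x y : 'rV[R]_n.+1) (p q : 'I_n.+1).

Lemma coroot_root p q : p != q -> coroot (evec R p - evec R q) = evec R p - evec R q.
Proof.
move=> pq; have qp : q != p by rewrite eq_sym.
rewrite /coroot; have -> : ip (evec R p - evec R q) (evec R p - evec R q) = 2.
  by rewrite ipBr !ip_evecr !mxE !eqxx (negbTE pq) (negbTE qp) /=; ring.
by rewrite divff ?scale1r // pnatr_eq0.
Qed.

Lemma ip_coroot_root u p q : p != q ->
  ip u (coroot (evec R p - evec R q)) = u 0 p - u 0 q.
Proof. by move=> pq; rewrite coroot_root // ipBr !ip_evecr. Qed.

Lemma reflect_by_rootE x p q k : p != q ->
  reflect_by (evec R p - evec R q) x 0 k = x 0 (tperm p q k).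
Proof.
move=> pq; rewrite /reflect_by ip_coroot_root // /evec !mxE /=.
case: tpermP => [->|->|/eqP kp /eqP kq].
- by rewrite eqxx (negbTE pq) subr0 mulr1; ring.
- by rewrite eqxx eq_sym (negbTE pq) sub0r mulrN1 opprK; ring.
- by rewrite (negbTE kp) (negbTE kq) subr0 mulr0 subr0.
Qed.

Lemma W_orbit_perm x y : in_W_orbit x y ->
  exists s : 'S_n.+1, forall k, x 0 k = y 0 (s k).
Proof.
elim=> {x y} [x y [a [[p [q [pq ->]]] ->]] | x | x y z _ [s1 xy] _ [s2 yz]].
- by exists (tperm p q) => k; rewrite reflect_by_rootE // tpermK.
- by exists 1%g => k; rewrite perm1.
- by exists (s1 * s2)%g => k; rewrite permM xy yz.
Qed.

Lemma simple_root_inord (k : 'I_n) :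
  simple_root R k = evec R (inord k) - evec R (inord k.+1).
Proof.
have kn := ltn_ord k.
by congr (evec _ _ - evec _ _); apply: val_inj; rewrite /= inordK //; lia.
Qed.

Lemma inord_neq_succ (k : 'I_n) : (inord k : 'I_n.+1) != inord k.+1.
Proof. by have kn := ltn_ord k; apply/eqP => /(congr1 val) /=; rewrite !inordK; lia. Qed.

Lemma ip_coroot_simple_root u (k : 'I_n) :
  ip u (coroot (simple_root R k)) = u 0 (inord k) - u 0 (inord k.+1).
Proof. by rewrite simple_root_inord ip_coroot_root // inord_neq_succ. Qed.

Lemma ip_simple_root u (k : 'I_n) :
  ip u (simple_root R k) = u 0 (inord k) - u 0 (inord k.+1).
Proof.
by rewrite -ip_coroot_simple_root simple_root_inord coroot_root // inord_neq_succ.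
Qed.

End RootCalculus.

Lemma two_valued_of_single_drop (R : numDomainType) (f : nat -> R) (n j : nat) :
  (0 < j <= n)%N ->
  (forall k, (k < n)%N -> f k.+1 <= f k) ->
  (forall k, (k < n)%N -> f k.+1 = f k <-> k.+1 != j) ->
  f j < f 0 /\ forall k, (k <= n)%N -> f k = if (k < j)%N then f 0 else f j.
Proof.
move=> /andP[j0 jn] mono flat.
have below k : (k < j)%N -> f k = f 0.
  elim: k => // k IH kj; rewrite -IH; last lia.
  by apply/(flat k); [lia | apply/eqP; lia].
have above d : (j + d <= n)%N -> f (j + d)%N = f j.
  elim: d => [|d IH] jd; first by rewrite addn0.
  by rewrite addnS (proj2 (flat _ _)) ?IH //; [lia | lia | apply/eqP; lia].
split=> [|k kn].
  have jj : j = j.-1.+1 by rewrite prednK.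
  have jn' : (j.-1 < n)%N by lia.
  rewrite -(below j.-1); last lia.
  rewrite {1}jj lt_def mono // andbT.
  by apply/eqP => /esym /(flat _ jn'); rewrite -jj eqxx.
case: ltnP => [/below // | jk].
by rewrite -(subnKC jk) above //; lia.
Qed.

Lemma sub_if_gt0 (R : numDomainType) (a b : R) (x y : bool) : b < a ->
  (0 < (if x then a else b) - (if y then a else b)) = x && ~~ y.
Proof.
move=> ba; case: x; case: y; rewrite /= ?subrr ?ltxx ?subr_gt0 //.
by rewrite lt_gtF.
Qed.

Lemma is_integer_gt0 (R : numDomainType) (x : R) :
  is_integer x -> 0 < x -> exists2 m : nat, (0 < m)%N & x = m%:R.
Proof. by case=> [[m|m] ->]; rewrite ltr0z // ltz_nat => m0; exists m. Qed.

Lemma sum_if_count (V : nmodType) (T : Type) (t : pred T) (r : seq T) (a b : V) :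
  \sum_(k <- r) (if t k then a else b) = a *+ count t r + b *+ count (predC t) r.
Proof.
elim: r => [|x r IH]; first by rewrite big_nil !mulr0n addr0.
rewrite big_cons IH /=; case: (t x); rewrite !add1n !add0n mulrS.
  by rewrite addrA.
by rewrite addrCA.
Qed.

Lemma count_ltn_iota (j m : nat) : count (fun k => k < j)%N (iota 0 m) = minn j m.
Proof.
elim: m => // m IH; rewrite -addn1 iotaD count_cat IH /= add0n addn0.
by case: ltnP; lia.
Qed.

Lemma perm_map_inord_iota (n : nat) (s : 'S_n.+1) :
  perm_eq [seq val (s (inord k)) | k <- iota 0 n.+1] (iota 0 n.+1).
Proof.
have s_inj : {in iota 0 n.+1 &, injective (fun k => val (s (inord k)))}.
  move=> x y; rewrite !mem_iota !add0n => /andP[_ xn] /andP[_ yn].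
  by move/val_inj/perm_inj/(congr1 (@nat_of_ord _)); rewrite !inordK.
have s_uniq : uniq [seq val (s (inord k)) | k <- iota 0 n.+1].
  by rewrite map_inj_in_uniq ?iota_uniq.
have s_sub : {subset [seq val (s (inord k)) | k <- iota 0 n.+1] <= iota 0 n.+1}.
  by move=> _ /mapP[k _ ->]; rewrite mem_iota add0n ltn_ord.
have [|_ s_mem] := uniq_min_size s_uniq s_sub; first by rewrite size_map.
exact: uniq_perm (iota_uniq _ _) s_mem.
Qed.

Lemma count_perm_ltn (n j : nat) (s : 'S_n.+1) :
  count (fun k => s (inord k) < j)%N (iota 0 n.+1) = minn j n.+1.
Proof.
rewrite -count_ltn_iota -(seq.permP (perm_map_inord_iota s) (fun k => k < j)%N).
by rewrite count_map.
Qed.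

(* The coordinates of the weight with coordinate sum 0 whose [j] larger
   coordinates exceed the [n + 1 - j] smaller ones by 1. *)
Definition pattern_coord {R : numFieldType} (n j : nat) (x : bool) : R :=
  if x then 1 - j%:R / n.+1%:R else - (j%:R / n.+1%:R).

Lemma two_valued_pattern_coord (R : numFieldType) (n j m : nat) (a b : R) :
  (j <= n.+1)%N -> a - b = m%:R -> a *+ j + b *+ (n.+1 - j) = 0 ->
  forall x : bool, (if x then a else b) = m%:R * pattern_coord n j x.
Proof.
move=> jn abm sum_ab.
have a_eq : a = b + m%:R by rewrite -abm addrCA subrr addr0.
have N0 : (n.+1%:R : R) != 0 by rewrite pnatr_eq0.
have b_eq : b = - (m%:R * (j%:R / n.+1%:R)).
  apply: (mulIf N0); rewrite mulNr -mulrA divfK //.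
  apply/eqP; rewrite -addr_eq0 -sum_ab a_eq.
  by rewrite -[_ *+ j]mulr_natr -[b *+ _]mulr_natr natrB //; apply/eqP; ring.
by case; rewrite /pattern_coord ?a_eq b_eq; ring.
Qed.

(* The coordinate patterns of the listed weights; [true] marks the coordinates
   carrying the larger of the two values. *)
Definition basic_patterns (n i j : nat) : seq (seq bool) :=
  match n, i, j with
  | 1, 1, 1 => [:: [:: true; false]; [:: false; true]]
  | 2, 1, 1 => [:: [:: false; true; false]]
  | 2, 1, 2 => [:: [:: true; true; false]]
  | 2, 2, 1 => [:: [:: true; false; false]]
  | 2, 2, 2 => [:: [:: true; false; true]]
  | 3, 2, 2 => [:: [:: true; false; true; false]]
  | _, _, _ => [::]
  end%N.

Lemma descent_constraint_adjacent (n i : nat) (t : nat -> bool) :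
  (forall k, (k < n)%N -> k.+1 != i -> t k && ~~ t k.+1) ->
  forall k, (k.+1 < n)%N -> (k.+1 == i) || (k.+2 == i).
Proof.
move=> desc k kn; apply/norP => -[ki ki'].
have /andP[_ /negP tk1] := desc k (ltnW kn) ki.
by have /andP[/tk1] := desc k.+1 kn ki'.
Qed.

Lemma basic_pattern_mem (n i j : nat) (t : nat -> bool) :
  (1 <= i <= n)%N -> (1 <= j <= n)%N ->
  (forall k, (k < n)%N -> k.+1 != i -> t k && ~~ t k.+1) ->
  count t (iota 0 n.+1) = j ->
  [seq t k | k <- iota 0 n.+1] \in basic_patterns n i j.
Proof.
move=> i_range j_range desc t_count; move: j_range; rewrite -{}t_count.
have adj := descent_constraint_adjacent desc.
have n_le3 : (n <= 3)%N by have := adj 0%N; have := adj 2%N; lia.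
case: n i_range desc adj n_le3 => [|[|[|[|n]]]] // i_range desc adj _ /=.
- lia.
- have -> : i = 1%N by lia.
  by case: (t 0%N); case: (t 1%N).
- have [i_eq | i_eq] : i = 1%N \/ i = 2%N by lia.
  + have := desc 1%N isT; rewrite i_eq => /(_ isT).
    by case: (t 0%N); case: (t 1%N); case: (t 2%N).
  + have := desc 0%N isT; rewrite i_eq => /(_ isT).
    by case: (t 0%N); case: (t 1%N); case: (t 2%N).
- have i_eq : i = 2%N by have := adj 0%N; have := adj 1%N; lia.
  have := desc 0%N isT; have := desc 2%N isT; rewrite i_eq => /(_ isT) + /(_ isT).
  by case: (t 0%N); case: (t 1%N); case: (t 2%N); case: (t 3%N).
Qed.

Lemma listed_of_pattern (R : numFieldType) (n i j : nat) (bs : seq bool)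
    (mu : 'rV[R]_n.+1) :
  bs \in basic_patterns n i j ->
  (forall k : 'I_n.+1, mu 0 k = pattern_coord n j (nth false bs k)) ->
  listed n i j mu.
Proof.
case: n i j mu => [|[|[|[|n]]]] [|[|[|i]]] [|[|[|j]]] //= mu; rewrite ?inE.
all: try (by rewrite in_nil).
- case/orP=> /eqP-> mu_eq.
  + exists [:: 1/2; -(1/2)]; first by rewrite inE eqxx.
    by case=> [[|[|k]] kn] //=; rewrite mu_eq /pattern_coord /=; field.
  + exists [:: -(1/2); 1/2]; first by rewrite !inE eqxx orbT.
    by case=> [[|[|k]] kn] //=; rewrite mu_eq /pattern_coord /=; field.
all: move=> /eqP-> mu_eq; eexists; first exact: mem_head.
all: by case=> [[|[|[|[|k]]]] kn] //=; rewrite mu_eq /pattern_coord /=; field.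
Qed.

Section BasicWeight.
Variables (R : realFieldType) (n i j : nat) (lam : 'rV[R]_n.+1).
Hypotheses (j_range : (1 <= j <= n)%N) (lam_basic : basic_weight n i j lam).

Lemma basic_weight_two_valued : exists (s : 'S_n.+1) (a b : R),
  b < a /\ forall k, lam 0 k = if (s k < j)%N then a else b.
Proof.
have [_ _ [mu [lam_mu dom mu_flat]]] := lam_basic.
have [s lamE] := W_orbit_perm lam_mu.
pose f k := mu 0 (inord k).
have [f_drop f_step] :
    f j < f 0%N /\ forall k, (k <= n)%N -> f k = if (k < j)%N then f 0%N else f j.
  apply: two_valued_of_single_drop => // k kn.
    by have := dom (Ordinal kn); rewrite ip_coroot_simple_root subr_ge0.
  rewrite -(mu_flat (Ordinal kn)) ip_simple_root -/(f k) -/(f k.+1).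
  by split=> [-> | /eqP]; [rewrite subrr | rewrite subr_eq0 => /eqP].
exists s, (f 0%N), (f j); split=> // k.
have -> : lam 0 k = f (s k) by rewrite lamE /f inord_val.
by rewrite f_step // -ltnS.
Qed.

Lemma basic_weight_pattern : exists (t : nat -> bool) (m : nat),
  [/\ (0 < m)%N, count t (iota 0 n.+1) = j,
      forall k, (k < n)%N -> k.+1 != i -> t k && ~~ t k.+1
    & forall k : 'I_n.+1, lam 0 k = m%:R * pattern_coord n j (t k)].
Proof.
have [[lam_sum lam_int] lam_pos _] := lam_basic.
have /andP[j0 jn] := j_range.
have [s [a [b [ba lamE]]]] := basic_weight_two_valued.
pose t k := (s (inord k) < j)%N.
have lam_t k : lam 0 (inord k) = if t k then a else b by rewrite lamE.
have t_count : count t (iota 0 n.+1) = j by rewrite count_perm_ltn; lia.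
have [m m0 abm] : exists2 m : nat, (0 < m)%N & a - b = m%:R.
  apply: is_integer_gt0; last by rewrite subr_gt0.
  pose p := (s^-1 (inord 0))%g; pose q := (s^-1 (inord j))%g.
  have [lam_p lam_q] : lam 0 p = a /\ lam 0 q = b.
    by rewrite !lamE !permKV !inordK // j0 ltnn.
  have pq : p != q by apply: contraTneq ba => pq; rewrite -lam_p -lam_q pq ltxx.
  by rewrite -lam_p -lam_q -ip_coroot_root //; apply: lam_int; exists p, q.
have sum_ab : a *+ j + b *+ (n.+1 - j) = 0.
  have tC_count : count (predC t) (iota 0 n.+1) = (n.+1 - j)%N.
    by have := count_predC t (iota 0 n.+1); rewrite size_iota t_count; lia.
  rewrite -tC_count -t_count -[RHS]lam_sum -sum_if_count.
  change (iota 0 n.+1) with (index_iota 0 n.+1); rewrite big_mkord.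
  by apply: eq_bigr => k _; rewrite -lam_t inord_val.
have lam_coord := two_valued_pattern_coord (leqW jn) abm sum_ab.
exists t, m; split=> // [k kn ki | k].
  have [z [z0 lam_z]] := lam_pos (Ordinal kn) ki.
  by move: z0; rewrite -(ltr0z R) -lam_z ip_coroot_simple_root !lam_t sub_if_gt0.
by rewrite -lam_coord -lam_t inord_val.
Qed.
End BasicWeight.

Theorem theorem5p7 (R : realFieldType) (n i j : nat) (lam : 'rV[R]_(n.+1)) :
  (0 < n)%N -> (1 <= i <= n)%N -> (1 <= j <= n)%N ->
  basic_system R n i j ->
  basic_weight n i j lam ->
  exists m : nat, (0 < m)%N /\
    exists2 mu : 'rV[R]_(n.+1), listed n i j mu & lam = m%:R *: mu.
Proof.
(* [0 < n] follows from the range of [j], and [basic_system] from [basic_weight]. *)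
move=> _ i_range j_range _ lam_basic.
have [t [m [m0 t_count t_desc lamE]]] := basic_weight_pattern j_range lam_basic.
have m_neq0 : (m%:R : R) != 0 by rewrite pnatr_eq0 -lt0n.
exists m; split=> //; exists (m%:R^-1 *: lam); last by rewrite scalerA divff ?scale1r.
apply: (listed_of_pattern (basic_pattern_mem i_range j_range t_desc t_count)) => k.
by rewrite mxE lamE mulKf // (nth_map 0%N) ?size_iota // nth_iota // add0n.
Qed.
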